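(* For every $[\mu]\in\mathbb PV_n$ one has $F_n([\mu])\ge\frac4n$, so $\frac4n$ is the minimum value of $F_n:\mathbb PV_n\to\mathbb R$. Moreover, $F_n([\mu])=\frac4n$ if and only if $[\mu]$ is a critical point of $F_n$ of type $(0;n)$, i.e. if and only if $\mathrm M_\mu$ is a real multiple of the identity.
   Context: $V_n$ is the space of bilinear maps $\mu:\mathbb C^n\times\mathbb C^n\to\mathbb C^n$ with standard Hermitian structures. $L^\mu_XY=\mu(X,Y)$, $R^\mu_XY=\mu(Y,X)$, $\mathrm M_\mu=2\sum_i L^\mu_{X_i}(L^\mu_{X_i})^*-2\sum_i (L^\mu_{X_i})^*L^\mu_{X_i}-2\sum_i (R^\mu_{X_i})^*R^\mu_{X_i}$ ($\{X_i\}$ orthonormal), $\|\mu\|^2=\sum_{i,j}\|\mu(X_i,X_j)\|^2$, $F_n([\mu])=\operatorname{tr}\mathrm M_\mu^2/\|\mu\|^4$. $[\mu]$ is a critical point of $F_n$ iff $\mathrm M_\mu=c_\mu I+D_\mu$ with $c_\mu\in\mathbb R$, $D_\mu$ a derivation of $\mu$; it is of type $(0;n)$ when moreover $D_\mu=0$. *)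

(* Complex numbers: an arbitrary numClosedFieldType C
   (e.g. the complex numbers R[i]); conjugation is Num.conj (notation x^* ). *)
From mathcomp Require Import all_boot all_order all_algebra.
Set Implicit Arguments. Unset Strict Implicit. Unset Printing Implicit Defensive.
Import Order.TTheory GRing.Theory Num.Theory.
Local Open Scope ring_scope.

(* A bilinear map mu : C^n x C^n -> C^n, given by its structure constants
   w.r.t. the standard (orthonormal) basis X_0..X_{n-1}:
   mu(X_i, X_j) = \sum_k mu i j k X_k. *)
Definition bilin (C : numClosedFieldType) (n : nat) := 'I_n -> 'I_n -> 'I_n -> C.

Section Defs.
Variables (C : numClosedFieldType) (n : nat).
Implicit Types (mu : bilin C n) (A D : 'M[C]_n).

Definition muv mu (i j : 'I_n) : 'cV[C]_n := \col_k mu i j k.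

Definition adj A : 'M[C]_n := (map_mx Num.conj A)^T.

(* L^mu_{X_i} : Y |-> mu(X_i, Y);  column j is mu(X_i, X_j) *)
Definition Lmat mu (i : 'I_n) : 'M[C]_n := \matrix_(k, j) mu i j k.
(* R^mu_{X_i} : Y |-> mu(Y, X_i);  column j is mu(X_j, X_i) *)
Definition Rmat mu (i : 'I_n) : 'M[C]_n := \matrix_(k, j) mu j i k.

Definition Mmu mu : 'M[C]_n :=
  2%:R *: (\sum_i Lmat mu i *m adj (Lmat mu i))
  - 2%:R *: (\sum_i adj (Lmat mu i) *m Lmat mu i)
  - 2%:R *: (\sum_i adj (Rmat mu i) *m Rmat mu i).

Definition normsq mu : C := \sum_i \sum_j \sum_k `|mu i j k| ^+ 2.

Definition Fn mu : C := \tr (Mmu mu *m Mmu mu) / (normsq mu ^+ 2).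

Definition is_derivation mu D : Prop :=
  forall i j : 'I_n,
    D *m muv mu i j = \sum_a D a i *: muv mu a j + \sum_b D b j *: muv mu i b.

Definition critical mu : Prop :=
  exists (c : C) (D : 'M[C]_n),
    c \is Num.real /\ is_derivation mu D /\ Mmu mu = c%:M + D.

Definition critical_type0n mu : Prop :=
  exists (c : C) (D : 'M[C]_n),
    c \is Num.real /\ is_derivation mu D /\ Mmu mu = c%:M + D /\ D = 0.

End Defs.

From mathcomp Require Import all_boot all_order all_algebra.
From mathcomp Require Import ring.
Set Implicit Arguments. Unset Strict Implicit. Unset Printing Implicit Defensive.
Import Order.TTheory GRing.Theory Num.Theory.
Local Open Scope ring_scope.

(* M_mu is Hermitian with trace -2||mu||^2, since each of the three sums has
   trace ||mu||^2.  Splitting a Hermitian matrix into its scalar part and its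
   traceless part B gives tr(M^2) = (tr M)^2/n + ||B||^2 (Frobenius norm), so
   F_n = 4/n + ||B||^2/||mu||^4 >= 4/n, with equality iff B = 0, i.e. iff
   M_mu is a (necessarily real) multiple of the identity. *)

Section HermitianMatrices.
Variables (C : numClosedFieldType) (n : nat).
Implicit Types (A B : 'M[C]_n).

Lemma adjE A i j : adj A i j = (A j i)^*.
Proof. by rewrite /adj !mxE. Qed.

Lemma adjK A : adj (adj A) = A.
Proof. by apply/matrixP => i j; rewrite !adjE conjCK. Qed.

Lemma adj_mul A B : adj (A *m B) = adj B *m adj A.
Proof.
apply/matrixP => i j; rewrite adjE !mxE rmorph_sum.
by apply: eq_bigr => k _; rewrite !adjE rmorphM mulrC.
Qed.

Lemma adj0 : adj (0 : 'M[C]_n) = 0.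
Proof. by apply/matrixP => i j; rewrite !mxE rmorph0. Qed.

Lemma adjD A B : adj (A + B) = adj A + adj B.
Proof. by apply/matrixP => i j; rewrite !mxE rmorphD. Qed.

Lemma adjB A B : adj (A - B) = adj A - adj B.
Proof. by apply/matrixP => i j; rewrite !mxE rmorphB. Qed.

Lemma adj_sum (I : finType) (F : I -> 'M[C]_n) :
  adj (\sum_i F i) = \sum_i adj (F i).
Proof. exact: (big_morph _ adjD adj0). Qed.

Lemma adjZ (c : C) A : c \is Num.real -> adj (c *: A) = c *: adj A.
Proof. by move=> cR; apply/matrixP => i j; rewrite !mxE rmorphM /= conj_Creal. Qed.

Lemma adj_scalar (c : C) : c \is Num.real -> adj (c%:M : 'M[C]_n) = c%:M.
Proof.
by move=> cR; apply/matrixP => i j; rewrite adjE !mxE rmorphMn /= conj_Creal // eq_sym.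
Qed.

Lemma herm_mul_adj (I : finType) (F : I -> 'M[C]_n) :
  adj (\sum_i F i *m adj (F i)) = \sum_i F i *m adj (F i).
Proof. by rewrite adj_sum; apply: eq_bigr => i _; rewrite adj_mul adjK. Qed.

Lemma herm_adj_mul (I : finType) (F : I -> 'M[C]_n) :
  adj (\sum_i adj (F i) *m F i) = \sum_i adj (F i) *m F i.
Proof. by rewrite adj_sum; apply: eq_bigr => i _; rewrite adj_mul adjK. Qed.

Lemma mxtrace_adj A : \tr (adj A) = (\tr A)^*.
Proof. by rewrite rmorph_sum; apply: eq_bigr => i _; rewrite adjE. Qed.

Lemma herm_mxtrace_real A : adj A = A -> \tr A \is Num.real.
Proof. by move=> hA; rewrite CrealE -mxtrace_adj hA. Qed.

Lemma mxtrace_mul_adj A : \tr (A *m adj A) = \sum_i \sum_j `|A i j| ^+ 2.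
Proof.
apply: eq_bigr => i _; rewrite mxE; apply: eq_bigr => j _.
by rewrite adjE normCK.
Qed.

Lemma mxtrace_mul_adj_ge0 A : 0 <= \tr (A *m adj A).
Proof.
by rewrite mxtrace_mul_adj; do 2!(apply: sumr_ge0 => ? _); apply: exprn_ge0.
Qed.

Lemma mxtrace_mul_adj_eq0 A : \tr (A *m adj A) = 0 -> A = 0.
Proof.
rewrite mxtrace_mul_adj => A0; apply/matrixP => i j; rewrite mxE.
have Ai0 : \sum_j `|A i j| ^+ 2 = 0.
  by apply: (psumr_eq0P _ A0) => // k _; apply: sumr_ge0 => l _; apply: exprn_ge0.
have Aij0 : `|A i j| ^+ 2 = 0 by apply: (psumr_eq0P _ Ai0) => // k _; apply: exprn_ge0.
by apply/eqP; rewrite -normr_eq0 -sqrf_eq0 Aij0.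
Qed.

Definition traceless_part A : 'M[C]_n := A - (\tr A / n%:R)%:M.

Hypothesis n_gt0 : (0 < n)%N.

Lemma natr_dim_neq0 : (n%:R : C) != 0.
Proof. by rewrite pnatr_eq0 -lt0n. Qed.

Lemma mxtrace_sqr_herm A : adj A = A ->
  \tr (A *m A) = \tr A ^+ 2 / n%:R
                 + \tr (traceless_part A *m adj (traceless_part A)).
Proof.
move=> hA; set c := \tr A / n%:R.
have cR : c \is Num.real by rewrite rpredM ?rpredV ?rpred_nat ?herm_mxtrace_real.
rewrite /traceless_part -/c adjB hA adj_scalar // mulmxBl !mulmxBr.
rewrite -scalar_mxM mul_mx_scalar mul_scalar_mx !raddfB /= !mxtraceZ mxtrace_scalar.
rewrite -mulr_natr /c; field; exact: natr_dim_neq0.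
Qed.

Lemma scalar_mx_mxtraceE A (c : C) : A = c%:M -> c = \tr A / n%:R.
Proof.
by move=> ->; rewrite mxtrace_scalar -[c *+ n]mulr_natr mulfK // natr_dim_neq0.
Qed.

Lemma traceless_part_eq0P A : adj A = A ->
  traceless_part A = 0 <-> exists c : C, c \is Num.real /\ A = c%:M.
Proof.
move=> hA; split.
  move/eqP; rewrite subr_eq0 => /eqP A_scalar; exists (\tr A / n%:R).
  by rewrite rpredM ?rpredV ?rpred_nat ?herm_mxtrace_real.
case=> c [_ A_scalar]; rewrite /traceless_part -(scalar_mx_mxtraceE A_scalar).
by rewrite A_scalar subrr.
Qed.

End HermitianMatrices.

Section MomentMap.
Variables (C : numClosedFieldType) (n : nat) (mu : bilin C n).

Lemma normsq_ge0 : 0 <= normsq mu.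
Proof. by do 3!(apply: sumr_ge0 => ? _); apply: exprn_ge0. Qed.

Lemma normsq_eq0 : normsq mu = 0 -> forall i j k, mu i j k = 0.
Proof.
move=> mu0 i j k.
have ge0_sum2 i' : 0 <= \sum_j' \sum_k' `|mu i' j' k'| ^+ 2.
  by do 2!(apply: sumr_ge0 => ? _); apply: exprn_ge0.
have mui0 := psumr_eq0P (fun i' _ => ge0_sum2 i') mu0 (erefl true : true) (i := i).
have muij0 : \sum_k' `|mu i j k'| ^+ 2 = 0.
  by apply: (psumr_eq0P _ mui0) => // ? _; apply: sumr_ge0 => ? _; apply: exprn_ge0.
have : `|mu i j k| ^+ 2 = 0 by apply: (psumr_eq0P _ muij0) => // ? _; apply: exprn_ge0.
by move/eqP; rewrite sqrf_eq0 normr_eq0 => /eqP.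
Qed.

Lemma sum_mxtrace_L : \sum_i \tr (Lmat mu i *m adj (Lmat mu i)) = normsq mu.
Proof.
apply: eq_bigr => i _; rewrite mxtrace_mul_adj exchange_big.
by apply: eq_bigr => j _; apply: eq_bigr => k _; rewrite mxE.
Qed.

Lemma sum_mxtrace_R : \sum_i \tr (Rmat mu i *m adj (Rmat mu i)) = normsq mu.
Proof.
rewrite /normsq [RHS]exchange_big; apply: eq_bigr => i _.
rewrite mxtrace_mul_adj exchange_big.
by apply: eq_bigr => j _; apply: eq_bigr => k _; rewrite mxE.
Qed.

Lemma mxtrace_Mmu : \tr (Mmu mu) = - (2%:R * normsq mu).
Proof.
rewrite /Mmu !raddfB /= !mxtraceZ !linear_sum /=.
rewrite (eq_bigr _ (fun i _ => mxtrace_mulC (adj (Lmat mu i)) _)).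
rewrite (eq_bigr _ (fun i _ => mxtrace_mulC (adj (Rmat mu i)) _)).
rewrite sum_mxtrace_L sum_mxtrace_R; ring.
Qed.

Lemma Mmu_herm : adj (Mmu mu) = Mmu mu.
Proof. by rewrite /Mmu !adjB !adjZ ?rpred_nat // herm_mul_adj !herm_adj_mul. Qed.

Lemma is_derivation0 : is_derivation mu 0.
Proof.
by move=> i j; rewrite mul0mx !big1 ?addr0 // => ? _; rewrite mxE scale0r.
Qed.

Lemma critical_type0nP :
  critical_type0n mu <-> exists c : C, c \is Num.real /\ Mmu mu = c%:M.
Proof.
split; first by case=> c [D [cR [_ [-> ->]]]]; exists c; rewrite addr0.
by case=> c [cR Mc]; exists c, 0; rewrite addr0; split=> //; split; first exact: is_derivation0.
Qed.

Hypothesis n_gt0 : (0 < n)%N.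
Hypothesis mu_neq0 : normsq mu != 0.

Lemma Fn_decomp : Fn mu = 4%:R / n%:R
  + \tr (traceless_part (Mmu mu) *m adj (traceless_part (Mmu mu))) / normsq mu ^+ 2.
Proof.
rewrite /Fn mxtrace_sqr_herm ?Mmu_herm // mxtrace_Mmu.
by field; rewrite mu_neq0 natr_dim_neq0.
Qed.

End MomentMap.

Theorem lemma4p5 (C : numClosedFieldType) (n : nat) (mu : bilin C n) :
  (0 < n)%N -> (exists i j k, mu i j k != 0) ->
  (4%:R / n%:R <= Fn mu)
  /\ (Fn mu = 4%:R / n%:R <-> critical_type0n mu)
  /\ (Fn mu = 4%:R / n%:R <-> exists c : C, c \is Num.real /\ Mmu mu = c%:M).
Proof.
move=> n_gt0 [i [j [k muijk]]].
have mu_neq0 : normsq mu != 0.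
  by apply: contra muijk => /eqP/normsq_eq0 ->.
have N2_neq0 : normsq mu ^+ 2 != 0 by rewrite expf_neq0.
set B := traceless_part (Mmu mu).
have Fn_min : Fn mu = 4%:R / n%:R <-> B = 0.
  rewrite Fn_decomp // -/B; split=> [/eqP | ->]; last first.
    by rewrite adj0 mul0mx mxtrace0 mul0r addr0.
  rewrite -subr_eq0 addrAC subrr add0r mulf_eq0 invr_eq0 (negPf N2_neq0) orbF.
  by move/eqP/mxtrace_mul_adj_eq0.
split.
  by rewrite Fn_decomp // lerDl divr_ge0 ?mxtrace_mul_adj_ge0 ?exprn_ge0 ?normsq_ge0.
by rewrite critical_type0nP Fn_min traceless_part_eq0P // Mmu_herm.
Qed.
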